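(* Let $\mathcal{P}$ be the set of all (nonempty) integer partitions. As formal power series in $x,y$ with coefficients polynomial in $p,q$, $$\sum_{\lambda\in\mathcal{P}}p^{\mathrm{dist}(\lambda)}q^{\mathrm{even}(\lambda)}x^{\ell(\lambda)}y^{\lambda_1}=\frac{pxy}{1-x}+\frac{\left(\frac{pqx}{1-qx}+\frac{pxy(1-qx+pqx)}{(1-x)(1-qx)}\right)\left(1+\frac{px}{1-x}\right)y^2}{1-\left(1+\frac{px}{1-x}\right)\left(1+\frac{pqx}{1-qx}\right)y^2}.$$ Consequently, $$\sum_{\lambda\in\mathcal{P}}p^{\mathrm{rep}(\lambda)}q^{\mathrm{even}(\lambda)}x^{\Gamma(\lambda)}=\frac{x(1-(p-1)q(x^2+x))}{1-p(1+q)x-(1-p^2q)x^2-(1-p)(1+q)x^3-(p-1)^2qx^4},$$ and in particular $$\sum_{\lambda\in\mathcal{P}}p^{\mathrm{rep}(\lambda)}x^{\Gamma(\lambda)}=\sum_{\lambda\in\mathcal{P}}p^{\mathrm{even}(\lambda)}x^{\Gamma(\lambda)}=\frac{x}{1-(1+p)x-(1-p)x^2}.$$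
   Context: A partition is a finite nonempty weakly decreasing sequence $\lambda=(\lambda_1,\ldots,\lambda_k)$ of positive integers; $\ell(\lambda)=k$ is its number of parts and $\lambda_1$ its largest part. The perimeter is $\Gamma(\lambda)=\lambda_1+\ell(\lambda)-1$. $\mathrm{dist}(\lambda)$ is the number of distinct part values of $\lambda$; $\mathrm{rep}(\lambda)=|\{1\le i\le \ell(\lambda)-1:\lambda_i=\lambda_{i+1}\}|=\ell(\lambda)-\mathrm{dist}(\lambda)$; $\mathrm{even}(\lambda)=|\{1\le i\le\ell(\lambda):\lambda_i\text{ even}\}|$. *)

From mathcomp Require Import all_boot all_order all_algebra.
Set Implicit Arguments. Unset Strict Implicit. Unset Printing Implicit Defensive.
Import GRing.Theory.
Local Open Scope ring_scope.

Definition is_partition (s : seq nat) : bool :=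
  [&& s != [::], sorted geq s & all (fun k => 0 < k)%N s].
Definition nparts (s : seq nat) : nat := size s.
Definition largest (s : seq nat) : nat := head 0%N s.
Definition perimeter (s : seq nat) : nat := (largest s + nparts s - 1)%N.
Definition dist (s : seq nat) : nat := size (undup s).
Definition rep (s : seq nat) : nat :=
  (\sum_(i < (size s).-1) (nth 0 s i == nth 0 s i.+1))%N.
Definition even (s : seq nat) : nat := count (fun k => ~~ odd k) s.

(* Bivariate series in x,y: f i j = coefficient of x^i y^j. *)
Definition bser (R : comRingType) := nat -> nat -> R.

Section Bser.
Variable R : comRingType.
Definition bcst (c : R) : bser R := fun i j => if (i == 0)%N && (j == 0)%N then c else 0.
Definition bX : bser R := fun i j => if (i == 1)%N && (j == 0)%N then 1 else 0.
Definition bY : bser R := fun i j => if (i == 0)%N && (j == 1)%N then 1 else 0.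
Definition badd (f g : bser R) : bser R := fun i j => f i j + g i j.
Definition bsub (f g : bser R) : bser R := fun i j => f i j - g i j.
Definition bmul (f g : bser R) : bser R := fun i j =>
  \sum_(a < i.+1) \sum_(b < j.+1) f a b * g (i - a)%N (j - b)%N.
Definition bpow (f : bser R) (k : nat) : bser R := iter k (bmul f) (bcst 1).
(* Inverse of a series d with constant term 1: 1/d = sum_k (1-d)^k
   (the sum is finite coefficientwise since 1-d has zero constant term). *)
Definition binv (d : bser R) : bser R := fun i j =>
  \sum_(k < (i + j).+1) bpow (bsub (bcst 1) d) k i j.
Definition bdiv (f d : bser R) : bser R := bmul f (binv d).
End Bser.

Definition user (R : comRingType) := nat -> R.

Section User.
Variable R : comRingType.
Definition ucst (c : R) : user R := fun n => if (n == 0)%N then c else 0.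
Definition uX : user R := fun n => if (n == 1)%N then 1 else 0.
Definition uadd (f g : user R) : user R := fun n => f n + g n.
Definition usub (f g : user R) : user R := fun n => f n - g n.
Definition umul (f g : user R) : user R := fun n =>
  \sum_(a < n.+1) f a * g (n - a)%N.
Definition upow (f : user R) (k : nat) : user R := iter k (umul f) (ucst 1).
Definition uinv (d : user R) : user R := fun n =>
  \sum_(k < n.+1) upow (usub (ucst 1) d) k n.
Definition udiv (f d : user R) : user R := umul f (uinv d).
End User.

(* sum_lambda p^dist q^even x^l y^lambda_1 : coefficient of x^i y^j is the
   sum over partitions with i parts and largest part j (all parts <= j). *)
Definition gf_dist_even (R : comRingType) (p q : R) : bser R := fun i j =>
  \sum_(t : i.-tuple 'I_j.+1 | is_partition (map val t) && (largest (map val t) == j))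
     p ^+ dist (map val t) * q ^+ even (map val t).

(* sum_lambda w(lambda) x^Gamma(lambda) : a partition with perimeter n has
   fewer than n+2 parts, all < n+2. *)
Definition gf_perim (R : comRingType) (w : seq nat -> R) : user R := fun n =>
  \sum_(l < n.+2) \sum_(t : l.-tuple 'I_n.+2 |
          is_partition (map val t) && (perimeter (map val t) == n)) w (map val t).

(* Sort partitions by their largest part and build them by stacking parts from the top.
   A part k carries the weight z_k = q^[k even], times a if it equals the next part and c
   otherwise, so that a partition has weight a^rep c^dist q^even.  With u_b = 1 - a z_b x and
   v_b = u_b + c z_b x, the series D_b(x) of weighted weakly decreasing sequences with parts
   at most b satisfies D_b u_b = D_(b-1) v_b, and the series g_b(x) of partitions with
   largest part b satisfies g_b u_b = c z_b x D_(b-1).  As z is 2-periodic, this yields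
   g_(b+2) u_1 u_2 = g_b v_1 v_2, i.e. G(x,y) = sum_b g_b y^b satisfies
   G (u_1 u_2 - v_1 v_2 y^2) = c x u_2 y + c q x v_1 y^2.
   For (a, c) = (1, p) this is the first identity.  For (a, c) = (p, 1), setting y = x turns
   G into x times the perimeter series; its specialisations q = 1 (after cancelling the
   factor 1 - (p-1)x - (p-1)x^2) and p = 1 give the last two identities.
   Series are compared through their truncations below degree N in each variable, where a
   series with constant term 1 becomes invertible. *)

From mathcomp Require Import all_boot all_order all_algebra.
From mathcomp Require Import ring zify.
From Stdlib Require Import Setoid Morphisms.
Set Implicit Arguments. Unset Strict Implicit. Unset Printing Implicit Defensive.
Import GRing.Theory.
Local Open Scope ring_scope.

Section SeriesModX.
Variable R : comRingType.
Implicit Types (N : nat) (P Q U : {poly R}) (f g d : user R).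

Definition eqmodX N P Q := forall k, (k < N)%N -> P`_k = Q`_k.

#[global] Instance eqmodX_equiv N : Equivalence (eqmodX N).
Proof.
split=> [P k _ | P Q PQ k kN | P Q S PQ QS k kN] //; first by rewrite PQ.
by rewrite PQ // QS.
Qed.

#[global] Instance eqmodX_add N : Proper (eqmodX N ==> eqmodX N ==> eqmodX N) +%R.
Proof. by move=> P P' PP' Q Q' QQ' k kN; rewrite !coefD PP' // QQ'. Qed.

#[global] Instance eqmodX_opp N : Proper (eqmodX N ==> eqmodX N) -%R.
Proof. by move=> P P' PP' k kN; rewrite !coefN PP'. Qed.

#[global] Instance eqmodX_mul N : Proper (eqmodX N ==> eqmodX N ==> eqmodX N) *%R.
Proof.
move=> P P' PP' Q Q' QQ' k kN; rewrite !coefM; apply: eq_bigr => -[i /= ik] _.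
by rewrite PP' ?QQ' //; lia.
Qed.

#[global] Instance eqmodX_exp N : Proper (eqmodX N ==> eq ==> eqmodX N) (@GRing.exp _).
Proof.
move=> P P' PP' k _ <-; elim: k => [|k IHk]; first reflexivity.
by rewrite !exprS; apply: eqmodX_mul.
Qed.

Lemma eqmodX_eq N P Q : P = Q -> eqmodX N P Q.
Proof. by move=> ->. Qed.

Lemma eqmodX_sum N I (r : seq I) (F G : I -> {poly R}) :
  (forall i, eqmodX N (F i) (G i)) -> eqmodX N (\sum_(i <- r) F i) (\sum_(i <- r) G i).
Proof. by move=> FG k kN; rewrite !coef_sum; apply: eq_bigr => i _; rewrite FG. Qed.

Lemma coef_exp_lt P k n : P`_0 = 0 -> (n < k)%N -> (P ^+ k)`_n = 0.
Proof.
move=> P0; elim: k n => [|k IHk] n // nk; rewrite exprS coefM big1 // => -[[|i] /= ?] _.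
  by rewrite P0 mul0r.
by rewrite IHk ?mulr0 //; lia.
Qed.

Lemma eqmodX_geom N P : P`_0 = 0 -> eqmodX N ((1 - P) * \sum_(k < N) P ^+ k) 1.
Proof.
move=> P0; have -> : (1 - P) * \sum_(k < N) P ^+ k = 1 - P ^+ N.
  by rewrite -[1 - P ^+ N]opprB subrX1; ring.
by move=> k kN; rewrite coefB coef_exp_lt // subr0.
Qed.

Lemma eqmodX_cancelr N P Q U : U`_0 = 1 -> eqmodX N (P * U) (Q * U) -> eqmodX N P Q.
Proof.
move=> U0 PQ; have /(eqmodX_geom (N := N)) : (1 - U)`_0 = 0 by rewrite coefB coef1 U0 subrr.
rewrite opprB addrC subrK => UV.
by rewrite -[P]mulr1 -[Q]mulr1 -UV !mulrA PQ.
Qed.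

Definition upoly N f : {poly R} := \poly_(k < N) f k.

Lemma coef_upoly N f k : (upoly N f)`_k = if (k < N)%N then f k else 0.
Proof. exact: coef_poly. Qed.

Lemma upoly_eqmodXP N f g :
  eqmodX N (upoly N f) (upoly N g) -> forall n, (n < N)%N -> f n = g n.
Proof. by move=> fg n nN; have := fg n nN; rewrite !coef_upoly nN. Qed.

Lemma upoly_add N f g : upoly N (uadd f g) = upoly N f + upoly N g.
Proof. by apply/polyP => k; rewrite coefD !coef_upoly; case: ifP; rewrite ?addr0. Qed.

Lemma upoly_sub N f g : upoly N (usub f g) = upoly N f - upoly N g.
Proof. by apply/polyP => k; rewrite coefB !coef_upoly; case: ifP; rewrite ?subr0. Qed.

Lemma upoly_mul N f g : eqmodX N (upoly N (umul f g)) (upoly N f * upoly N g).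
Proof.
move=> k kN; rewrite coef_upoly kN coefM; apply: eq_bigr => -[i /= ik] _.
by rewrite !coef_upoly ifT ?ifT //; lia.
Qed.

Lemma upoly_cst N c : eqmodX N (upoly N (ucst c)) c%:P.
Proof. by move=> k kN; rewrite coef_upoly kN coefC. Qed.

Lemma upoly_X N : eqmodX N (upoly N (uX R)) 'X.
Proof. by move=> k kN; rewrite coef_upoly kN coefX /uX; case: (k == 1)%N. Qed.

Lemma upoly_rec N f g h (A B : R) : f 0%N = A * g 0%N ->
  (forall k, f k.+1 = A * g k.+1 + B * h k) ->
  eqmodX N (upoly N f) (A%:P * upoly N g + B%:P * 'X * upoly N h).
Proof.
move=> f0 fS [|k] kN; rewrite coefD coefCM -mulrA coefCM coefXM !coef_upoly kN //=.
  by rewrite f0 mulr0 addr0.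
by rewrite ifT // ltnW.
Qed.

Lemma upoly_pow N f k : eqmodX N (upoly N (upow f k)) (upoly N f ^+ k).
Proof.
elim: k => [|k IHk]; first exact: upoly_cst.
by rewrite exprS /upow iterS -/(upow f k) upoly_mul IHk.
Qed.

Lemma upoly_uinv N d : d 0%N = 1 ->
  eqmodX N (upoly N (uinv d)) (\sum_(k < N) (1 - upoly N d) ^+ k).
Proof.
move=> d0 n nN; rewrite coef_upoly nN coef_sum /uinv.
rewrite (big_ord_widen N (fun k => upow _ k n)) // big_mkcond /=.
apply: eq_bigr => k _; case: ifPn => [kn | ]; last first.
  rewrite -leqNgt => nk; rewrite coef_exp_lt //.
  by rewrite coefB coef1 coef_upoly ifT ?d0 ?subrr //; lia.
have := upoly_pow (N := N) (usub (ucst 1) d) k nN; rewrite coef_upoly nN => ->.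
suff E : eqmodX N (upoly N (usub (ucst 1) d) ^+ k) ((1 - upoly N d) ^+ k) by exact: E.
by rewrite upoly_sub upoly_cst polyC1.
Qed.

Lemma upoly_udiv N f d : d 0%N = 1 ->
  eqmodX N (upoly N (udiv f d) * upoly N d) (upoly N f).
Proof.
move=> d0; case: N => [k //|N].
have E0 : (1 - upoly N.+1 d)`_0 = 0 by rewrite coefB coef1 coef_upoly d0 subrr.
have dE : upoly N.+1 d = 1 - (1 - upoly N.+1 d) by ring.
rewrite upoly_mul upoly_uinv // -mulrA [_ * upoly _ d]mulrC {1}dE.
by rewrite eqmodX_geom // mulr1.
Qed.

Lemma udiv_eq N f d g (Pf Pd : {poly R}) : Pd`_0 = 1 ->
  eqmodX N (upoly N d) Pd -> eqmodX N (upoly N f) Pf -> eqmodX N (upoly N g * Pd) Pf ->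
  forall n, (n < N)%N -> g n = udiv f d n.
Proof.
move=> Pd0 dP fP gP n nN; have d0 : d 0%N = 1.
  by have := dP 0%N (leq_ltn_trans (leq0n n) nN); rewrite coef_upoly ifT ?Pd0 //; lia.
apply: upoly_eqmodXP (nN); apply: (@eqmodX_cancelr _ _ _ (upoly N d)).
  by rewrite coef_upoly ifT ?d0 //; lia.
by rewrite upoly_udiv // dP gP fP.
Qed.

Lemma eq_upoly N f g : f =1 g -> upoly N f = upoly N g.
Proof. by move=> fg; apply/polyP => k; rewrite !coef_upoly fg. Qed.

Lemma upoly_widen N M f : (N <= M)%N -> eqmodX N (upoly M f) (upoly N f).
Proof. by move=> NM k kN; rewrite !coef_upoly kN (leq_trans kN NM). Qed.

Lemma eqmodX_mulXK N P Q : eqmodX N.+1 ('X * P) ('X * Q) -> eqmodX N P Q.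
Proof. by move=> PQ k kN; have := PQ k.+1 kN; rewrite !coefXM. Qed.
End SeriesModX.

Section SeriesModXY.
Variable R : comRingType.
Implicit Types (N : nat) (P Q U : {poly {poly R}}) (f g d : bser R).

Definition eqmodXY N P Q := forall j, (j < N)%N -> eqmodX N P`_j Q`_j.

#[global] Instance eqmodXY_equiv N : Equivalence (eqmodXY N).
Proof.
split=> [P j _ | P Q PQ j jN | P Q S PQ QS j jN]; first reflexivity.
  by symmetry; apply: PQ.
by transitivity Q`_j; [apply: PQ | apply: QS].
Qed.

#[global] Instance eqmodXY_add N : Proper (eqmodXY N ==> eqmodXY N ==> eqmodXY N) +%R.
Proof. by move=> P P' PP' Q Q' QQ' j jN; rewrite !coefD (PP' j jN) (QQ' j jN). Qed.

#[global] Instance eqmodXY_opp N : Proper (eqmodXY N ==> eqmodXY N) -%R.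
Proof. by move=> P P' PP' j jN; rewrite !coefN (PP' j jN). Qed.

#[global] Instance eqmodXY_mul N : Proper (eqmodXY N ==> eqmodXY N ==> eqmodXY N) *%R.
Proof.
move=> P P' PP' Q Q' QQ' j jN; rewrite !coefM; apply: eqmodX_sum => -[i /= ij].
by apply: eqmodX_mul; [apply: PP' | apply: QQ']; lia.
Qed.

#[global] Instance eqmodXY_exp N : Proper (eqmodXY N ==> eq ==> eqmodXY N) (@GRing.exp _).
Proof.
move=> P P' PP' k _ <-; elim: k => [|k IHk]; first reflexivity.
by rewrite !exprS; apply: eqmodXY_mul.
Qed.

Lemma eqmodXY_eq N P Q : P = Q -> eqmodXY N P Q.
Proof. by move=> ->. Qed.

Lemma coef_exp_lt2 P k i j : P`_0`_0 = 0 -> (i + j < k)%N -> (P ^+ k)`_j`_i = 0.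
Proof.
move=> P0; elim: k i j => [|k IHk] i j // ijk.
rewrite exprS coefM coef_sum big1 // => -[b /= bj] _; rewrite coefM big1 // => -[a /= ai] _.
have [/andP[/eqP-> /eqP->]|ab] := boolP ((a == 0) && (b == 0))%N.
  by rewrite P0 mul0r.
by rewrite IHk ?mulr0 //; lia.
Qed.

Lemma eqmodXY_geom N P : P`_0`_0 = 0 ->
  eqmodXY N ((1 - P) * \sum_(k < N + N) P ^+ k) 1.
Proof.
move=> P0; have -> : (1 - P) * \sum_(k < N + N) P ^+ k = 1 - P ^+ (N + N).
  by rewrite -[1 - P ^+ (N + N)]opprB subrX1; ring.
by move=> j jN i iN; rewrite !coefB coef_exp_lt2 ?subr0 //; lia.
Qed.

Lemma eqmodXY_cancelr N P Q U : U`_0`_0 = 1 -> eqmodXY N (P * U) (Q * U) -> eqmodXY N P Q.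
Proof.
move=> U0 PQ; have /(eqmodXY_geom (N := N)) : (1 - U)`_0`_0 = 0.
  by rewrite !coefB !coef1 U0 subrr.
rewrite opprB addrC subrK => UV.
by rewrite -[P]mulr1 -[Q]mulr1 -UV !mulrA PQ.
Qed.

(* The outer variable is y, the second index of [f]; x is ['X%:P]. *)
Definition bpoly N f : {poly {poly R}} := \poly_(j < N) upoly N (fun i => f i j).

Lemma coef_bpoly N f j i :
  (bpoly N f)`_j`_i = if ((j < N) && (i < N))%N then f i j else 0.
Proof. by rewrite coef_poly; case: ifP => _; rewrite ?coef_upoly ?coef0. Qed.

Lemma bpoly_eqmodXYP N f g : eqmodXY N (bpoly N f) (bpoly N g) ->
  forall i j, (i < N)%N -> (j < N)%N -> f i j = g i j.
Proof. by move=> fg i j iN jN; have := fg j jN i iN; rewrite !coef_bpoly iN jN. Qed.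

Lemma eqmodXY_coef N P Q :
  (forall j i, (j < N)%N -> (i < N)%N -> P`_j`_i = Q`_j`_i) -> eqmodXY N P Q.
Proof. by move=> PQ j jN i iN; apply: PQ. Qed.

Lemma bpoly_add N f g : bpoly N (badd f g) = bpoly N f + bpoly N g.
Proof.
by apply/polyP => j; apply/polyP => i; rewrite !coefD !coef_bpoly; case: ifP; rewrite ?addr0.
Qed.

Lemma bpoly_sub N f g : bpoly N (bsub f g) = bpoly N f - bpoly N g.
Proof.
by apply/polyP => j; apply/polyP => i; rewrite !coefB !coef_bpoly; case: ifP; rewrite ?subr0.
Qed.

Lemma bpoly_mul N f g : eqmodXY N (bpoly N (bmul f g)) (bpoly N f * bpoly N g).
Proof.
apply: eqmodXY_coef => j i jN iN; rewrite coef_bpoly jN iN coefM coef_sum /=.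
rewrite /bmul exchange_big /=.
apply: eq_bigr => -[b /= bj] _; rewrite coefM; apply: eq_bigr => -[a /= ai] _.
by rewrite !coef_bpoly !ifT //; lia.
Qed.

Lemma bpoly_cst N c : eqmodXY N (bpoly N (bcst c)) c%:P%:P.
Proof.
apply: eqmodXY_coef => j i jN iN; rewrite coef_bpoly jN iN coefC /bcst.
by case: j {jN} => [|j]; case: i {iN} => [|i]; rewrite /= ?coefC ?coef0.
Qed.

Lemma bpoly_X N : eqmodXY N (bpoly N (bX R)) 'X%:P.
Proof.
apply: eqmodXY_coef => j i jN iN; rewrite coef_bpoly jN iN coefC /bX.
by case: j {jN} => [|j]; rewrite ?coef0 ?andbF // coefX andbT; case: (i == 1)%N.
Qed.

Lemma bpoly_Y N : eqmodXY N (bpoly N (bY R)) 'X.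
Proof.
apply: eqmodXY_coef => j i jN iN; rewrite coef_bpoly jN iN coefX /bY.
by case: (j == 1)%N; rewrite ?coef0 ?andbF ?andbT // coefC.
Qed.

Lemma bpoly_pow N f k : eqmodXY N (bpoly N (bpow f k)) (bpoly N f ^+ k).
Proof.
elim: k => [|k IHk]; first by rewrite bpoly_cst !polyC1.
by rewrite exprS /bpow iterS -/(bpow f k) bpoly_mul IHk.
Qed.

Lemma bmul00 f g : bmul f g 0 0 = f 0%N 0%N * g 0%N 0%N.
Proof. by rewrite /bmul !big_ord1 !subnn. Qed.

Lemma bpoly_binv N d : d 0%N 0%N = 1 ->
  eqmodXY N (bpoly N (binv d)) (\sum_(k < N + N) (1 - bpoly N d) ^+ k).
Proof.
move=> d0; apply: eqmodXY_coef => j i jN iN.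
rewrite coef_bpoly jN iN !coef_sum /binv.
rewrite (big_ord_widen (N + N) (fun k => bpow _ k i j)); last by lia.
rewrite big_mkcond /=; apply: eq_bigr => k _; case: ifPn => [kij | ]; last first.
  rewrite -leqNgt => ijk; rewrite coef_exp_lt2 //.
  by rewrite !coefB !coef1 coef_bpoly ifT ?d0 ?subrr //; lia.
have := bpoly_pow (N := N) (bsub (bcst 1) d) k jN iN; rewrite coef_bpoly jN iN /= => ->.
suff E : eqmodXY N (bpoly N (bsub (bcst 1) d) ^+ k) ((1 - bpoly N d) ^+ k) by exact: E.
by rewrite bpoly_sub bpoly_cst !polyC1.
Qed.

Lemma bpoly_bdiv N f d : d 0%N 0%N = 1 ->
  eqmodXY N (bpoly N (bdiv f d) * bpoly N d) (bpoly N f).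
Proof.
move=> d0; case: N => [j //|N].
have E0 : (1 - bpoly N.+1 d)`_0`_0 = 0 by rewrite !coefB !coef1 coef_bpoly d0 subrr.
have dE : bpoly N.+1 d = 1 - (1 - bpoly N.+1 d) by ring.
rewrite bpoly_mul bpoly_binv // -mulrA [_ * bpoly _ d]mulrC {1}dE.
by rewrite eqmodXY_geom // mulr1.
Qed.

Lemma eqmodXY_rec2 N (g : nat -> {poly R}) (U V G1 G2 : {poly R}) :
  eqmodX N (g 0%N) 0 -> eqmodX N (g 1%N * U) G1 -> eqmodX N (g 2%N * U) G2 ->
  (forall b, eqmodX N (g b.+3 * U) (g b.+1 * V)) ->
  eqmodXY N ((\poly_(j < N) g j) * (U%:P - V%:P * 'X^2)) (G1%:P * 'X + G2%:P * 'X^2).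
Proof.
move=> g0 g1 g2 gS j jN; rewrite mulrBr mulrA !coefB !coefMC coefMXn coefMC.
rewrite coefD coefMX coefMXn !coefC !coef_poly jN.
case: j jN => [|[|[|b]]] jN /=; rewrite ?subr0 ?addr0 ?add0r.
- by rewrite g0 mul0r.
- exact: g1.
- by rewrite ifT ?g0 ?mul0r ?subr0 //; lia.
- by rewrite ifT ?subSS ?subn0 ?gS ?subrr //; lia.
Qed.

Lemma coef_hornerX (F : {poly {poly R}}) k :
  (F.['X])`_k = \sum_(j < k.+1) F`_j`_(k - j).
Proof.
rewrite (@horner_coef_wide _ (maxn (size F) k.+1)) ?leq_maxl // coef_sum.
rewrite (big_ord_widen (maxn (size F) k.+1) (fun j => F`_j`_(k - j))) ?leq_maxr //.
by rewrite [RHS]big_mkcond; apply: eq_bigr => j _; rewrite coefMXn ltnS; case: ltnP.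
Qed.

Lemma eqmodXY_hornerX N P Q : eqmodXY N P Q -> eqmodX N P.['X] Q.['X].
Proof.
move=> PQ k kN; rewrite !coef_hornerX; apply: eq_bigr => -[j /= jk] _.
by apply: PQ; lia.
Qed.

Lemma eq_bpoly N f g : f =2 g -> bpoly N f = bpoly N g.
Proof. by move=> fg; apply/polyP => j; apply/polyP => i; rewrite !coef_bpoly fg. Qed.

Lemma bpoly_add_div N g f d : d 0%N 0%N = 1 ->
  eqmodXY N (bpoly N (badd g (bdiv f d)) * bpoly N d) (bpoly N g * bpoly N d + bpoly N f).
Proof. by move=> d0; rewrite bpoly_add mulrDl bpoly_bdiv. Qed.

Lemma bpoly_div_add_div N f1 d1 f2 d2 : d1 0%N 0%N = 1 -> d2 0%N 0%N = 1 ->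
  eqmodXY N (bpoly N (badd (bdiv f1 d1) (bdiv f2 d2)) * (bpoly N d1 * bpoly N d2))
            (bpoly N f1 * bpoly N d2 + bpoly N f2 * bpoly N d1).
Proof.
move=> d10 d20; rewrite bpoly_add mulrDl mulrA [bpoly N d1 * _]mulrC mulrA.
by rewrite !bpoly_bdiv.
Qed.
End SeriesModXY.

Section ParityRecurrence.
Variables (R : comRingType) (a c q : R).

Definition zq (b : nat) : R := q ^+ (~~ odd b).
Definition uf (b : nat) : {poly R} := 1 - (a * zq b)%:P * 'X.
Definition vf (b : nat) : {poly R} := uf b + (c * zq b)%:P * 'X.

Definition gf_den : {poly {poly R}} := (uf 1 * uf 2)%:P - (vf 1 * vf 2)%:P * 'X^2.
Definition gf_num : {poly {poly R}} :=
  (c%:P * 'X * uf 2)%:P * 'X + ((c * q)%:P * 'X * vf 1)%:P * 'X^2.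

Lemma zq_add2 b : zq b.+2 = zq b.
Proof. by rewrite /zq /= negbK. Qed.

Lemma coef0_uf b : (uf b)`_0 = 1.
Proof. by rewrite coefB coef1 coefCM coefX mulr0 subr0. Qed.

Lemma uf_vf_pair b : uf b.+1 * uf b.+2 = uf 1 * uf 2 /\ vf b.+1 * vf b.+2 = vf 1 * vf 2.
Proof. by rewrite /vf /uf !zq_add2 /zq /=; case: (odd b); split; ring. Qed.

Variables (N : nat) (D M g : nat -> {poly R}).
Hypothesis D0 : eqmodX N (D 0%N) 1.
Hypothesis g0 : eqmodX N (g 0%N) 0.
Hypothesis recM : forall b, eqmodX N (M b.+1) (c%:P * D b + (a * zq b.+1)%:P * 'X * M b.+1).
Hypothesis recD : forall b, eqmodX N (D b.+1) (D b + (zq b.+1)%:P * 'X * M b.+1).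
Hypothesis recg : forall b, eqmodX N (g b.+1) ((zq b.+1)%:P * 'X * M b.+1).

Lemma Mmul_uf b : eqmodX N (M b.+1 * uf b.+1) (c%:P * D b).
Proof.
have -> : M b.+1 * uf b.+1 = M b.+1 - (a * zq b.+1)%:P * 'X * M b.+1 by rewrite /uf; ring.
by rewrite {1}recM addrK.
Qed.

Lemma Dmul_uf b : eqmodX N (D b.+1 * uf b.+1) (D b * vf b.+1).
Proof.
rewrite recD mulrDl -mulrA Mmul_uf; apply: eqmodX_eq.
by rewrite /vf; ring.
Qed.

Lemma gmul_uf b : eqmodX N (g b.+1 * uf b.+1) ((c * zq b.+1)%:P * 'X * D b).
Proof.
rewrite recg -mulrA Mmul_uf; apply: eqmodX_eq.
by rewrite polyCM; ring.
Qed.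

Lemma gmul_uf12 b : eqmodX N (g b.+3 * (uf 1 * uf 2)) (g b.+1 * (vf 1 * vf 2)).
Proof.
apply: (@eqmodX_cancelr _ _ _ _ (uf b.+1) (coef0_uf _)).
have [<- _] := uf_vf_pair b.+1; have [_ <-] := uf_vf_pair b.
have -> : g b.+3 * (uf b.+2 * uf b.+3) * uf b.+1 = g b.+3 * uf b.+3 * uf b.+2 * uf b.+1.
  by ring.
rewrite gmul_uf zq_add2; set K := (c * zq b.+1)%:P * 'X.
have -> : K * D b.+2 * uf b.+2 * uf b.+1 = K * (D b.+2 * uf b.+2) * uf b.+1 by ring.
rewrite Dmul_uf.
have -> : K * (D b.+1 * vf b.+2) * uf b.+1 = K * vf b.+2 * (D b.+1 * uf b.+1) by ring.
have -> : g b.+1 * (vf b.+1 * vf b.+2) * uf b.+1 = g b.+1 * uf b.+1 * (vf b.+1 * vf b.+2).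
  by ring.
by rewrite Dmul_uf gmul_uf; apply: eqmodX_eq; rewrite /K; ring.
Qed.

Lemma poly_g_mul_den : eqmodXY N ((\poly_(j < N) g j) * gf_den) gf_num.
Proof.
apply: eqmodXY_rec2 => //; last exact: gmul_uf12.
  by rewrite mulrA gmul_uf D0 /zq /= expr0; apply: eqmodX_eq; ring.
rewrite [uf 1 * _]mulrC mulrA gmul_uf -mulrA Dmul_uf D0 /zq /= expr1.
by apply: eqmodX_eq; ring.
Qed.
End ParityRecurrence.

Fixpoint dec_seqs (i b : nat) : seq (seq nat) :=
  if i is i'.+1 then [seq x :: s | x <- iota 1 b, s <- dec_seqs i' x] else [:: [::]].

Lemma dec_seqsS i b :
  dec_seqs i.+1 b.+1 = dec_seqs i.+1 b ++ [seq b.+1 :: s | s <- dec_seqs i b.+1].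
Proof.
transitivity [seq x :: s | x <- iota 1 b.+1, s <- dec_seqs i x]; first by [].
have -> : iota 1 b.+1 = iota 1 b ++ [:: b.+1] by rewrite -[b.+1]addn1 iotaD addnC.
by rewrite /= allpairs_cat allpairs_cons /= cats0.
Qed.

Lemma geq_trans : ssrbool.transitive geq.
Proof. exact: rev_trans leq_trans. Qed.

Lemma mem_dec_seqs i b s : (s \in dec_seqs i b) =
  [&& size s == i, sorted geq s, all (fun k => 0 < k)%N s & all (fun k => k <= b)%N s].
Proof.
elim: i b s => [|i IHi] b [|x s] //=; first by apply/allpairsPdep => -[y [t [_ _]]].
rewrite eqSS (path_sortedE geq_trans).
apply/allpairsPdep/idP => [[y [t [yb tx [-> ->]]]] | ].
  move: tx yb; rewrite IHi mem_iota => /and4P[-> -> -> tx] yb /=.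
  rewrite !andbT; apply/and4P; split => //; try lia.
  by apply/allP => k /(allP tx); lia.
case/and5P=> ? /andP[xs ?] /andP[x0 ?] xb ?; exists x, s; split => //.
  by rewrite mem_iota; lia.
by rewrite IHi; apply/and4P.
Qed.

Lemma dec_seqs_path i b s : s \in dec_seqs i b -> path geq b s.
Proof.
rewrite mem_dec_seqs (path_sortedE geq_trans) => /and4P[_ -> _ sb].
by rewrite andbT.
Qed.

Lemma uniq_dec_seqs i b : uniq (dec_seqs i b).
Proof.
elim: i b => [|i IHi] b //; elim: b => [|b IHb] //.
rewrite dec_seqsS cat_uniq IHb map_inj_uniq ?IHi ?andbT; last by move=> ? ? [].
by apply/hasPn => _ /mapP[t _ ->]; rewrite mem_dec_seqs /= ltnn !andbF.
Qed.

Definition partitions_lj (l j : nat) : seq (seq nat) :=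
  if (l, j) is (l'.+1, _.+1) then [seq j :: s | s <- dec_seqs l' j] else [::].

Lemma uniq_partitions_lj l j : uniq (partitions_lj l j).
Proof.
case: l j => [|l] [|j] //=.
by rewrite map_inj_uniq ?uniq_dec_seqs // => ? ? [].
Qed.

Lemma mem_partitions_lj l j s :
  (s \in partitions_lj l j) = [&& size s == l, is_partition s & largest s == j].
Proof.
rewrite /is_partition /largest /partitions_lj.
case: l j s => [|l] [|j] [|x s] //=; rewrite ?andbF //.
- by case: x => [|x]; rewrite /= ?andbF.
- by apply/mapP => -[].
rewrite eqSS (path_sortedE geq_trans); have [->|xj] := eqVneq x j.+1; last first.
  case: mapP => [[t _ [x_eq _]]|_]; last by rewrite !andbF.
  by rewrite x_eq eqxx in xj.
rewrite mem_map => [|? ? [] //]; rewrite mem_dec_seqs.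
by rewrite andbT; case: (size s == l); case: sorted; case: (all _ s); case: (all _ s).
Qed.

Lemma sum_tuple_seq (R : nmodType) i n (P : pred (seq nat)) (F : seq nat -> R)
    (L : seq (seq nat)) : uniq L ->
  (forall s, (s \in L) = [&& size s == i, all (fun k => k < n)%N s & P s]) ->
  \sum_(t : i.-tuple 'I_n | P (map val t)) F (map val t) = \sum_(s <- L) F s.
Proof.
move=> uniqL memL.
rewrite -(big_map (fun t : i.-tuple 'I_n => map val t) P F) -big_filter.
apply: perm_big; apply: uniq_perm => [||s].
- rewrite filter_uniq // map_inj_uniq ?index_enum_uniq //.
  by move=> t1 t2 /(inj_map val_inj) /val_inj.
- by [].
rewrite memL andbA mem_filter [P s && _]andbC; congr (_ && _).
apply/mapP/idP => [[t _ ->]|/andP[/eqP si sn]].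
  by rewrite size_map size_tuple eqxx all_map; apply/allP => k _ /=.
have sz : size (pmap (insub : nat -> option 'I_n) s) == i.
  by rewrite size_pmap_sub -si -all_count.
exists (Tuple sz); first by rewrite mem_index_enum.
rewrite /= (pmap_filter (insubK _)); apply/esym/all_filterP.
by rewrite (eq_all (isSome_insub _)).
Qed.

Section WeightedPartitions.
Variables (R : comRingType) (a c q : R) (w : seq nat -> R).
Hypothesis w_nil : w [::] = 1.
Hypothesis w_cons : forall x s, (0 < x)%N -> path geq x s ->
  w (x :: s) = zq q x * ((if head 0%N s == x then a else c) * w s).

Definition gf_dec i b := \sum_(s <- dec_seqs i b) w s.
Definition gf_dec_top i b := \sum_(s <- dec_seqs i b) (if head 0%N s == b then a else c) * w s.
Definition gf_lj i j := \sum_(s <- partitions_lj i j) w s.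

Lemma gf_dec_cons i b :
  \sum_(s <- dec_seqs i b.+1) w (b.+1 :: s) = zq q b.+1 * gf_dec_top i b.+1.
Proof.
rewrite big_distrr big_seq [RHS]big_seq; apply: eq_bigr => s /dec_seqs_path sb.
exact: w_cons.
Qed.

Lemma gf_dec_topS i b :
  gf_dec_top i.+1 b.+1 = c * gf_dec i.+1 b + a * zq q b.+1 * gf_dec_top i b.+1.
Proof.
rewrite /gf_dec_top dec_seqsS big_cat big_map; congr (_ + _).
  rewrite /gf_dec big_distrr !big_seq; apply: eq_bigr => s /dec_seqs_path.
  by case: s => [|x s] //= /andP[xb _]; rewrite ifF //; apply/negbTE; rewrite neq_ltn ltnS xb.
by under eq_bigr do rewrite /= eqxx; rewrite -big_distrr gf_dec_cons /= mulrA.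
Qed.

Lemma gf_decS i b : gf_dec i.+1 b.+1 = gf_dec i.+1 b + zq q b.+1 * gf_dec_top i b.+1.
Proof. by rewrite /gf_dec dec_seqsS big_cat big_map gf_dec_cons. Qed.

Lemma gf_ljS i b : gf_lj i.+1 b.+1 = zq q b.+1 * gf_dec_top i b.+1.
Proof. by rewrite /gf_lj /= big_map gf_dec_cons. Qed.

Lemma gf_lj_mul_den N : eqmodXY N (bpoly N gf_lj * gf_den a c q) (gf_num a c q).
Proof.
apply: (poly_g_mul_den (D := fun b => upoly N (gf_dec^~ b))
                       (M := fun b => upoly N (gf_dec_top^~ b))).
- by move=> [|k] kN; rewrite coef_upoly kN coef1 /gf_dec /= ?big_seq1 ?big_nil.
- by move=> k kN; rewrite coef_upoly kN coef0 /gf_lj; case: k {kN} => [|k]; rewrite big_nil.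
- move=> b; apply: upoly_rec => [|k]; last exact: gf_dec_topS.
  by rewrite /gf_dec_top /gf_dec /= !big_seq1 w_nil.
- move=> b; have := @upoly_rec _ N (gf_dec^~ b.+1) (gf_dec^~ b) (gf_dec_top^~ b.+1) 1 (zq q b.+1).
  rewrite polyC1 !mul1r; apply=> [|k]; first by rewrite /gf_dec /= !big_seq1.
  by rewrite mul1r gf_decS.
- move=> b; have := @upoly_rec _ N (gf_lj^~ b.+1) (gf_dec^~ b) (gf_dec_top^~ b.+1) 0 (zq q b.+1).
  rewrite polyC0 !mul0r !add0r; apply=> [|k]; first by rewrite /gf_lj big_nil.
  by rewrite mul0r add0r gf_ljS.
Qed.
End WeightedPartitions.

Lemma mem_path_geq x s : (0 < x)%N -> path geq x s -> (x \in s) = (head 0%N s == x).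
Proof.
case: s => [|y s] x0 /=; first by case: x x0.
rewrite inE eq_sym (path_sortedE geq_trans) => /andP[yx /andP[ys _]].
case: eqP => //= /eqP xy; apply/negbTE/negP => /(allP ys) /= xy'.
by rewrite eqn_leq yx xy' in xy.
Qed.

Lemma dist_cons x s : dist (x :: s) = ((x \notin s) + dist s)%N.
Proof. by rewrite /dist /=; case: (x \in s). Qed.

Lemma rep_cons x s : (0 < x)%N -> rep (x :: s) = ((head 0%N s == x) + rep s)%N.
Proof.
case: s => [|y s] x0; first by rewrite /rep !big_ord0; case: x x0.
by rewrite /rep /= big_ord_recl /= eq_sym.
Qed.

Section PartitionStatistics.
Variables (R : comRingType) (p q : R).

Lemma dist_even_cons x s : (0 < x)%N -> path geq x s ->
  p ^+ dist (x :: s) * q ^+ even (x :: s) =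
  zq q x * ((if head 0%N s == x then 1 else p) * (p ^+ dist s * q ^+ even s)).
Proof.
move=> x0 xs; rewrite dist_cons -mem_path_geq // /even /= /zq !exprD.
by case: (x \in s); rewrite /= ?expr0 ?expr1; ring.
Qed.

Lemma rep_even_cons x s : (0 < x)%N -> path geq x s ->
  p ^+ rep (x :: s) * q ^+ even (x :: s) =
  zq q x * ((if head 0%N s == x then p else 1) * (p ^+ rep s * q ^+ even s)).
Proof.
move=> x0 _; rewrite rep_cons // /even /= /zq !exprD.
by case: (head 0%N s == x); rewrite /= ?expr0 ?expr1; ring.
Qed.
End PartitionStatistics.

Lemma partition_le s : is_partition s -> all (fun k => k <= largest s)%N s.
Proof.
case: s => [|x s] // /and3P[_ /= xs _]; rewrite leqnn /=.
by move: xs; rewrite (path_sortedE geq_trans) => /andP[].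
Qed.

Lemma partition_gt0 s : is_partition s -> (0 < largest s)%N && (0 < size s)%N.
Proof. by case: s => [|x s] // /and3P[_ _ /andP[-> _]]. Qed.

Lemma gf_dist_evenE (R : comRingType) (p q : R) i j :
  gf_dist_even p q i j = gf_lj (fun s => p ^+ dist s * q ^+ even s) i j.
Proof.
apply: (@sum_tuple_seq _ i j.+1 (fun s => is_partition s && (largest s == j))
          (fun s => p ^+ dist s * q ^+ even s) _ (uniq_partitions_lj i j)) => s.
rewrite mem_partitions_lj; case: (size s == i) => //=.
case sp: (is_partition s); rewrite ?andbF //=.
have [<-|_] := eqVneq (largest s) j; rewrite ?andbF // andbT.
by apply/esym/allP => k /(allP (partition_le sp)).
Qed.

Lemma gf_perimE (R : comRingType) (w : seq nat -> R) n :
  gf_perim w n = \sum_(l < n.+2) gf_lj w l (n.+1 - l).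
Proof.
apply: eq_bigr => -[l /= ln] _.
apply: (@sum_tuple_seq _ l n.+2 (fun s => is_partition s && (perimeter s == n)) w _
          (uniq_partitions_lj _ _)) => s.
rewrite mem_partitions_lj /perimeter /nparts; case: eqP => //= <-.
case sp: (is_partition s); rewrite ?andbF //=.
have /andP[s1 s0] := partition_gt0 sp; have sle := partition_le sp.
have [sn|sn] := eqVneq (largest s) (n.+1 - size s)%N; last first.
  suff /negbTE-> : (largest s + size s - 1)%N != n by rewrite andbF.
  by apply: contra sn => /eqP; lia.
have -> : (largest s + size s - 1 == n)%N by apply/eqP; lia.
by rewrite andbT; apply/esym/allP => k /(allP sle); lia.
Qed.

Section DistEven.
Variables (R : comRingType) (p q : R).
Local Notation x := ('X%:P : {poly {poly R}}).
Local Notation y := ('X : {poly {poly R}}).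
Local Notation pp := (p%:P%:P : {poly {poly R}}).
Local Notation qq := (q%:P%:P : {poly {poly R}}).

Lemma gf_dist_even_mul_den N :
  eqmodXY N (bpoly N (gf_dist_even p q) * gf_den 1 p q) (gf_num 1 p q).
Proof.
rewrite (eq_bpoly _ (gf_dist_evenE p q)); apply: gf_lj_mul_den => [|z s z0 zs].
  by rewrite /dist /even /= mulr1.
exact: dist_even_cons.
Qed.

Lemma coef00_1subX (P : {poly {poly R}}) : (1 - P * x)`_0`_0 = 1.
Proof. by rewrite -!horner_coef0 !hornerE subr0. Qed.

(* a, b, c and r stand for the truncations of A, B, C and of the right-hand side of the
   first identity. *)
Lemma dist_even_rhs_mul_den N (a b c r : {poly {poly R}}) :
  eqmodXY N (a * (1 - x)) (1 - x + pp * x) ->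
  eqmodXY N (c * (1 - qq * x)) (1 - qq * x + pp * qq * x) ->
  eqmodXY N (b * ((1 - qq * x) * ((1 - x) * (1 - qq * x))))
    (pp * qq * x * ((1 - x) * (1 - qq * x))
     + pp * (x * y) * (1 - qq * x + pp * qq * x) * (1 - qq * x)) ->
  eqmodXY N (r * ((1 - x) * (1 - a * c * y ^+ 2)))
    (pp * (x * y) * (1 - a * c * y ^+ 2) + b * a * y ^+ 2 * (1 - x)) ->
  eqmodXY N (r * gf_den 1 p q) (gf_num 1 p q).
Proof.
set U := (1 - x) * (1 - qq * x) => hA hC hB hr.
have {}hB : eqmodXY N (b * U) (pp * qq * x * (1 - x) + pp * (x * y) * (1 - qq * x + pp * qq * x)).
  apply: (eqmodXY_cancelr (coef00_1subX qq)); rewrite -[b * U * _]mulrA [U * _]mulrC hB.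
  by apply: eqmodXY_eq; rewrite /U; ring.
apply: (@eqmodXY_cancelr _ _ _ _ (1 - x)); first by rewrite -[x]mul1r coef00_1subX.
have -> : gf_den 1 p q = U - (1 - x + pp * x) * (1 - qq * x + pp * qq * x) * y ^+ 2.
  by rewrite /gf_den /vf /uf /zq /= /U; ring.
rewrite -hA -hC.
have -> : r * (U - a * (1 - x) * (c * (1 - qq * x)) * y ^+ 2) * (1 - x) =
          r * ((1 - x) * (1 - a * c * y ^+ 2)) * U by rewrite /U; ring.
rewrite hr.
have -> : (pp * (x * y) * (1 - a * c * y ^+ 2) + b * a * y ^+ 2 * (1 - x)) * U =
    pp * x * y * U - pp * x * y ^+ 3 * (a * (1 - x)) * (c * (1 - qq * x))
    + b * U * (a * (1 - x)) * y ^+ 2 by rewrite /U; ring.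
rewrite hA hB hC; apply: eqmodXY_eq.
by rewrite /gf_num /vf /uf /zq /= /U; ring.
Qed.
End DistEven.

Lemma gf_dist_even_closed_form (R : comRingType) (p q : R) :
  (let X := bX R in let Y := bY R in
   let P := bcst p in let Q := bcst q in let O := bcst (1 : R) in
   let A := badd O (bdiv (bmul P X) (bsub O X)) in
   let C := badd O (bdiv (bmul (bmul P Q) X) (bsub O (bmul Q X))) in
   let B := badd (bdiv (bmul (bmul P Q) X) (bsub O (bmul Q X)))
                 (bdiv (bmul (bmul P (bmul X Y))
                             (badd (bsub O (bmul Q X)) (bmul (bmul P Q) X)))
                       (bmul (bsub O X) (bsub O (bmul Q X)))) in
   let rhs := badd (bdiv (bmul P (bmul X Y)) (bsub O X))
                   (bdiv (bmul (bmul B A) (bpow Y 2))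
                         (bsub O (bmul (bmul A C) (bpow Y 2)))) in
   forall i j, gf_dist_even p q i j = rhs i j).
Proof.
move=> X Y P Q O A C B rhs i j; set N := (i + j).+1.
apply: (bpoly_eqmodXYP (N := N)); try lia.
have den0 : (gf_den 1 p q)`_0`_0 = 1.
  by rewrite /gf_den coefB coefMXn /= subr0 coefC /= coef0M !coef0_uf mulr1.
apply: (eqmodXY_cancelr den0); rewrite gf_dist_even_mul_den.
have d1 : bsub O X 0%N 0%N = 1 by rewrite /bsub /O /X /bcst /bX /= subr0.
have d2 : bsub O (bmul Q X) 0%N 0%N = 1.
  by rewrite /bsub bmul00 /O /Q /X /bcst /bX /= mulr0 subr0.
have d12 : bmul (bsub O X) (bsub O (bmul Q X)) 0%N 0%N = 1 by rewrite bmul00 d1 d2 mulr1.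
have dT : bsub O (bmul (bmul A C) (bpow Y 2)) 0%N 0%N = 1.
  by rewrite /bsub /bpow /= !bmul00 /Y /bY /= !mul0r mulr0 subr0.
have := bpoly_add_div (N := N) O (bmul P X) d1; rewrite -/A => hA.
have := bpoly_add_div (N := N) O (bmul (bmul P Q) X) d2; rewrite -/C => hC.
have := bpoly_div_add_div (N := N) (bmul (bmul P Q) X)
  (bmul (bmul P (bmul X Y)) (badd (bsub O (bmul Q X)) (bmul (bmul P Q) X))) d2 d12.
rewrite -/B => hB.
have := bpoly_div_add_div (N := N) (bmul P (bmul X Y)) (bmul (bmul B A) (bpow Y 2)) d1 dT.
rewrite -/rhs => hr.
clearbody rhs B C A.
rewrite !(bpoly_add, bpoly_sub, bpoly_mul, bpoly_pow, bpoly_cst, bpoly_X, bpoly_Y) !polyC1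
  ?mul1r in hA hC hB hr.
by symmetry; apply: dist_even_rhs_mul_den hA hC hB hr.
Qed.

Lemma eq_gf_perim (R : comRingType) (w1 w2 : seq nat -> R) :
  w1 =1 w2 -> gf_perim w1 =1 gf_perim w2.
Proof. by move=> w12 n; apply: eq_bigr => l _; apply: eq_bigr => t _; apply: w12. Qed.

Lemma bpoly_gf_lj_hornerX (R : comRingType) (w : seq nat -> R) N :
  eqmodX N (bpoly N (gf_lj w)).['X] ('X * upoly N (gf_perim w)).
Proof.
move=> k kN; rewrite coef_hornerX coefXM.
have -> : \sum_(j < k.+1) (bpoly N (gf_lj w))`_j`_(k - j) = \sum_(j < k.+1) gf_lj w (k - j) j.
  by apply: eq_bigr => -[j /= jk] _; rewrite coef_bpoly ifT //; lia.
case: k kN => [|k] kN; first by rewrite big_ord1 /gf_lj big_nil.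
rewrite coef_upoly ifT; last by lia.
rewrite gf_perimE (reindex_inj rev_ord_inj); apply: eq_bigr => -[j /= jk] _.
by rewrite subSS subKn.
Qed.

Section PerimeterSeries.
Variables (R : comRingType) (p q : R).

Definition perim_den : {poly R} :=
  1 - (p * (1 + q))%:P * 'X - (1 - p ^+ 2 * q)%:P * 'X^2
    - ((1 - p) * (1 + q))%:P * 'X^3 - ((p - 1) ^+ 2 * q)%:P * 'X^4.
Definition perim_num : {poly R} := 'X * (1 - ((p - 1) * q)%:P * ('X^2 + 'X)).

Lemma gf_perim_rep_even_mul_den N :
  eqmodX N (upoly N (gf_perim (fun s => p ^+ rep s * q ^+ even s)) * perim_den) perim_num.
Proof.
set w := fun s => p ^+ rep s * q ^+ even s.
rewrite -(upoly_widen _ (leqnSn N)); apply: eqmodX_mulXK; set P := upoly _ _.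
have -> : 'X * (P * perim_den) = 'X * P * (gf_den p 1 q).['X].
  by rewrite /gf_den /vf /uf /zq /perim_den !hornerE /=; ring.
have -> : 'X * perim_num = (gf_num p 1 q).['X].
  by rewrite /gf_num /vf /uf /zq /perim_num !hornerE /=; ring.
rewrite -(bpoly_gf_lj_hornerX w) -hornerM; apply/eqmodXY_hornerX/gf_lj_mul_den => [|x s x0 xs].
  by rewrite /w /rep /even /= big_ord0 mulr1.
exact: rep_even_cons.
Qed.
End PerimeterSeries.

Lemma gf_perim_rep_even_closed_form (R : comRingType) (p q : R) :
  (let X := uX R in let O := ucst (1 : R) in let c := @ucst R in
   let num := umul X (usub O (umul (c ((p - 1) * q)) (uadd (upow X 2) X))) in
   let den := usub (usub (usub (usub O (umul (c (p * (1 + q))) X))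
                                    (umul (c (1 - p ^+ 2 * q)) (upow X 2)))
                              (umul (c ((1 - p) * (1 + q))) (upow X 3)))
                   (umul (c ((p - 1) ^+ 2 * q)) (upow X 4)) in
   forall n, gf_perim (fun s => p ^+ rep s * q ^+ even s) n = udiv num den n).
Proof.
move=> X O c num den n.
apply: (udiv_eq (N := n.+1) (Pf := perim_num p q) (Pd := perim_den p q)) => //.
- by rewrite -horner_coef0 /perim_den !hornerE /= !mulr0 !subr0.
- rewrite !(upoly_sub, upoly_mul, upoly_pow, upoly_cst, upoly_X) ?polyC1.
  by apply: eqmodX_eq; rewrite /perim_den; ring.
- rewrite !(upoly_sub, upoly_add, upoly_mul, upoly_pow, upoly_cst, upoly_X) ?polyC1.
  by apply: eqmodX_eq; rewrite /perim_num; ring.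
exact: gf_perim_rep_even_mul_den.
Qed.

Lemma gf_perim_rep_and_even_closed_form (R : comRingType) (p : R) :
  (let X := uX R in let O := ucst (1 : R) in let c := @ucst R in
   let rhs := udiv X (usub (usub O (umul (c (1 + p)) X))
                           (umul (c (1 - p)) (upow X 2))) in
   (forall n, gf_perim (fun s => p ^+ rep s) n = rhs n) /\
   (forall n, gf_perim (fun s => p ^+ even s) n = rhs n)).
Proof.
move=> X O c rhs; set D : {poly R} := 1 - (1 + p)%:P * 'X - (1 - p)%:P * 'X^2.
have closed_form w : (forall N, eqmodX N (upoly N (gf_perim w) * D) 'X) ->
    forall n, gf_perim w n = rhs n.
  move=> wD n; apply: (udiv_eq (N := n.+1) (Pf := 'X) (Pd := D)) => //.
  - by rewrite -horner_coef0 /D !hornerE /= !mulr0 !subr0.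
  - rewrite !(upoly_sub, upoly_mul, upoly_pow, upoly_cst, upoly_X) ?polyC1.
    by apply: eqmodX_eq; rewrite /D; ring.
  exact: upoly_X.
split; apply: closed_form => N.
- pose E : {poly R} := 1 - (p - 1)%:P * 'X - (p - 1)%:P * 'X^2.
  apply: (@eqmodX_cancelr _ _ _ _ E).
    by rewrite -horner_coef0 /E !hornerE /= !mulr0 !subr0.
  have := gf_perim_rep_even_mul_den p 1 (N := N).
  rewrite (eq_upoly _ (eq_gf_perim (w2 := fun s => p ^+ rep s) _)) => [h|s]; last first.
    by rewrite expr1n mulr1.
  have -> : upoly N (gf_perim (fun s => p ^+ rep s)) * D * E =
            upoly N (gf_perim (fun s => p ^+ rep s)) * perim_den p 1.
    by rewrite /D /E /perim_den; ring.
  by rewrite h /perim_num; apply: eqmodX_eq; rewrite /E; ring.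
have := gf_perim_rep_even_mul_den 1 p (N := N).
rewrite (eq_upoly _ (eq_gf_perim (w2 := fun s => p ^+ even s) _)) => [h|s]; last first.
  by rewrite expr1n mul1r.
have -> : D = perim_den 1 p by rewrite /D /perim_den; ring.
by rewrite h /perim_num; apply: eqmodX_eq; ring.
Qed.

Theorem theorem2p4 (R : comRingType) (p q : R) :
  (* first identity, bivariate series in x, y *)
  (let X := bX R in let Y := bY R in
   let P := bcst p in let Q := bcst q in let O := bcst (1 : R) in
   let A := badd O (bdiv (bmul P X) (bsub O X)) in
   let C := badd O (bdiv (bmul (bmul P Q) X) (bsub O (bmul Q X))) in
   let B := badd (bdiv (bmul (bmul P Q) X) (bsub O (bmul Q X)))
                 (bdiv (bmul (bmul P (bmul X Y))
                             (badd (bsub O (bmul Q X)) (bmul (bmul P Q) X)))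
                       (bmul (bsub O X) (bsub O (bmul Q X)))) in
   let rhs := badd (bdiv (bmul P (bmul X Y)) (bsub O X))
                   (bdiv (bmul (bmul B A) (bpow Y 2))
                         (bsub O (bmul (bmul A C) (bpow Y 2)))) in
   forall i j, gf_dist_even p q i j = rhs i j)
  /\
  (* second identity, univariate series in x *)
  (let X := uX R in let O := ucst (1 : R) in let c := @ucst R in
   let num := umul X (usub O (umul (c ((p - 1) * q)) (uadd (upow X 2) X))) in
   let den := usub (usub (usub (usub O (umul (c (p * (1 + q))) X))
                                    (umul (c (1 - p ^+ 2 * q)) (upow X 2)))
                              (umul (c ((1 - p) * (1 + q))) (upow X 3)))
                   (umul (c ((p - 1) ^+ 2 * q)) (upow X 4)) in
   forall n, gf_perim (fun s => p ^+ rep s * q ^+ even s) n = udiv num den n)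
  /\
  (* in particular *)
  (let X := uX R in let O := ucst (1 : R) in let c := @ucst R in
   let rhs := udiv X (usub (usub O (umul (c (1 + p)) X))
                           (umul (c (1 - p)) (upow X 2))) in
   (forall n, gf_perim (fun s => p ^+ rep s) n = rhs n) /\
   (forall n, gf_perim (fun s => p ^+ even s) n = rhs n)).
Proof.
split; first exact: gf_dist_even_closed_form.
split; first exact: gf_perim_rep_even_closed_form.
exact: gf_perim_rep_and_even_closed_form.
Qed.
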